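(* Let $X$ be the compact symplectic toric manifold determined by a moment polytope $P=\bigcap_{j=1}^m\{\mathbf{u}\in\mathbb{R}^n : \ell_j(\mathbf{u})\ge 0\}\subset\mathbb{R}^n$, where $\ell_j(\mathbf{u})=\langle \mathbf{u},\mathbf{v}_j\rangle-\lambda_j$. For a point $\mathbf{u}$ in the interior of $P$, the following are equivalent: (1) The toric fiber $L(\mathbf{u})$ is strongly bulk-balanced. (2) $\mathbf{u}\in\mathrm{Trop}(P,\mathbf{m})$ for every lattice point $\mathbf{m}\in\mathbb{Z}^n$. (3) $\mathbf{u}\in\mathrm{Trop}(P,\mathbf{m})$ for every primitive lattice point $\mathbf{m}\in\mathbb{Z}^n$ that is orthogonal to some $(n-1)$-dimensional subspace of $\mathbb{R}^n$ spanned by facet normal vectors $\mathbf{v}_j$ of $P$.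
   Context: The moment polytope is written uniquely as $P=\bigcap_{j=1}^m\{\mathbf{u}: \langle\mathbf{u},\mathbf{v}_j\rangle\ge\lambda_j\}$ with $\mathbf{v}_j\in\mathbb{Z}^n$ primitive inward normals and the intersection non-redundant (each half-space bounds a distinct facet); $\ell_j(\mathbf{u}):=\langle\mathbf{u},\mathbf{v}_j\rangle-\lambda_j$. $L(\mathbf{u})$ denotes the Lagrangian torus fiber of the moment map over $\mathbf{u}$. Tropicalization relative to $\mathbf{m}\in\mathbb{Z}^n$: $\mathrm{Trop}(P,\mathbf{m})$ is the non-differentiable locus of the piecewise-linear function $\mathbf{u}\mapsto\min\{\ell_j(\mathbf{u}) : \langle\mathbf{m},\mathbf{v}_j\rangle\neq0\}$; equivalently the set of $\mathbf{u}$ at which this minimum is attained by at least two distinct indices $j_1\ne j_2$ with $\langle \mathbf{m},\mathbf{v}_{j_1}\rangle\neq 0\neq\langle \mathbf{m},\mathbf{v}_{j_2}\rangle$. By convention $\mathrm{Trop}(P,\mathbf{0})=\mathbb{R}^n$. Strongly bulk-balanced: for $\mathbf{u}\in\mathrm{Int}(P)$ let $S_1<S_2<\cdots$ be the distinct values among $\ell_1(\mathbf{u}),\dots,\ell_m(\mathbf{u})$ and $I_l=\{j:\ell_j(\mathbf{u})=S_l\}$. Let $A_l^\perp=\mathrm{span}_\mathbb{R}\{\mathbf{v}_j : j\in I_1\cup\dots\cup I_l\}$ ($A_0^\perp=0$), $d_l=\dim A_l^\perp-\dim A_{l-1}^\perp$, and $\kappa$ the smallest $l$ with $A_l^\perp=\mathbb{R}^n$.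 Choose vectors $e^*_{r,s}\in\mathbb{Q}^n$ ($1\le r\le\kappa$, $1\le s\le d_r$) such that for each $l$, $\{e^*_{r,s}: r\le l\}$ is a $\mathbb{Q}$-basis of $A_l^\perp\cap\mathbb{Q}^n$, and every $\mathbf{v}_j$ lies in $\bigoplus_{r,s}\mathbb{Z}e^*_{r,s}$. Write $\mathbf{v}_j=\sum_{r,s}v_j^{r,s}e^*_{r,s}$ and $\mathbf{y}^{\mathbf{v}_j}=\prod_{r,s}y_{r,s}^{v_j^{r,s}}$ in variables $y_{r,s}$. For $c=(c_1,\dots,c_m)\in(\mathbb{C}^* )^m$ and $1\le l\le\kappa$ put $F^c_l(\mathbf{y})=\sum_{j\in I_l}c_j\,\mathbf{y}^{\mathbf{v}_j}$. The generalized leading term equation (for $c$) is the system $y_{l,s}\,\partial F^c_l/\partial y_{l,s}=0$ for all $1\le l\le\kappa$, $1\le s\le d_l$. The fiber $L(\mathbf{u})$ is strongly bulk-balanced if for some $c\in(\mathbb{C}^* )^m$ this system has a solution $(y_{r,s})\in(\mathbb{C}^* )^n$ (whether such a solution exists does not depend on the choice of the vectors $e^*_{r,s}$). *)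

From HB Require Import structures.
From mathcomp Require Import all_boot all_order all_algebra.
From mathcomp Require Import reals.
From mathcomp Require Import complex.
Set Implicit Arguments. Unset Strict Implicit. Unset Printing Implicit Defensive.
Import Order.TTheory GRing.Theory Num.Theory.
Local Open Scope ring_scope.

Section Defs.
Variables (R : realType) (n m : nat).
Variables (v : 'I_m -> 'I_n -> int) (lam : 'I_m -> R).

Definition pairZ (u : 'I_n -> R) (w : 'I_n -> int) : R := \sum_(i < n) u i * (w i)%:~R.
Definition dotZ (a w : 'I_n -> int) : int := \sum_(i < n) a i * w i.

Definition ell (j : 'I_m) (u : 'I_n -> R) : R := pairZ u (v j) - lam j.

Definition inP (u : 'I_n -> R) : Prop := forall j, 0 <= ell j u.
(* interior of P (P is n-dimensional and the description is non-redundant) *)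
Definition inIntP (u : 'I_n -> R) : Prop := forall j, 0 < ell j u.

(* primitive integer vector: the only natural number dividing all entries is 1
   (in particular the vector is nonzero) *)
Definition primitiveZ (w : 'I_n -> int) : Prop :=
  forall d : nat, (forall i, (d%:Z %| w i)%Z) -> d = 1%N.

Definition vR (j : 'I_m) : 'rV[R]_n := \row_(i < n) (v j i)%:~R.

(* real matrix whose rows are the v_j with j satisfying the predicate (other rows 0);
   its row space is span_R {v_j : S j} *)
Definition spanR (S : pred 'I_m) : 'M[R]_(m, n) :=
  \matrix_(j < m, i < n) (if S j then (v j i)%:~R else 0).

Definition normals_primitive : Prop := forall j, primitiveZ (v j).

Definition non_redundant : Prop :=
  forall j, exists u : 'I_n -> R, ell j u = 0 /\ forall i, i != j -> 0 < ell i u.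

Definition P_bounded : Prop :=
  exists B : R, forall u, inP u -> forall i, `|u i| <= B.

(* Delzant: at each vertex (point of P where the active normals span R^n),
   exactly n facets meet and their normals form a Z-basis of Z^n *)
Definition delzant : Prop :=
  forall u, inP u ->
    \rank (spanR (fun j => ell j u == 0)) = n ->
    exists f : 'I_n -> 'I_m,
      injective f /\ (forall j, ell j u = 0 <-> exists k, f k = j) /\
      `|\det (\matrix_(k < n, i < n) v (f k) i)| = 1.

Definition toric_polytope : Prop :=
  [/\ normals_primitive, non_redundant, P_bounded & delzant].

(* u in Trop(P, mm): the minimum of ell_j(u) over {j | <mm, v_j> <> 0} is attained by
   two distinct indices; Trop(P, 0) = R^n by convention *)
Definition in_trop (mm : 'I_n -> int) (u : 'I_n -> R) : Prop :=
  (forall i, mm i = 0) \/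
  exists j1 j2 : 'I_m,
    [/\ j1 != j2, dotZ mm (v j1) != 0, dotZ mm (v j2) != 0,
        ell j1 u = ell j2 u &
        forall j, dotZ mm (v j) != 0 -> ell j1 u <= ell j u].

(* Levels: the distinct values t among ell_j(u); I_t = {j | ell_j(u) = t};
   A_t^perp = span_R {v_j | ell_j(u) <= t}, A_{t-}^perp = span_R {v_j | ell_j(u) < t}. *)
Definition isLevel (u : 'I_n -> R) (t : R) : bool := [exists j, ell j u == t].
Definition dimA (u : 'I_n -> R) (t : R) : nat := \rank (spanR (fun j => ell j u <= t)).
Definition dimAprev (u : 'I_n -> R) (t : R) : nat := \rank (spanR (fun j => ell j u < t)).

Definition monoZ (y : 'I_n -> R[i]) (a : 'I_n -> int) : R[i] := \prod_(k < n) y k ^ a k.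

(* The rows e*_k (k : 'I_n) of the rational matrix E are the vectors e*_{r,s},
   ordered by level: e*_{r,s} with r <= l are exactly the rows k < dim A_l^perp.
   The variable y_{r,s} is y_k, and v_j = sum_k a j k * e*_k. *)
Definition adapted_basis (u : 'I_n -> R) (E : 'M[rat]_n) : Prop :=
  forall t, isLevel u t ->
    (* {e*_k | k < dim A_t^perp} is a Q-basis of A_t^perp \cap Q^n *)
    (forall q : 'rV[rat]_n,
        (map_mx ratr q <= spanR (fun j => (ell j u <= t)%R))%MS <->
        exists b : 'I_n -> rat, (forall k : 'I_n, (dimA u t <= k)%N -> b k = 0) /\
                                q = \sum_(k < n) b k *: row k E) /\
    (forall b : 'I_n -> rat, (forall k : 'I_n, (dimA u t <= k)%N -> b k = 0) ->
        \sum_(k < n) b k *: row k E = 0 -> forall k, b k = 0).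

Definition coords (E : 'M[rat]_n) (a : 'I_m -> 'I_n -> int) : Prop :=
  forall j, \row_(i < n) ((v j i)%:~R : rat) = \sum_(k < n) (a j k)%:~R *: row k E.

(* generalized leading term equation  y_{l,s} dF_l/dy_{l,s} = 0, where for the
   Laurent monomial y^{a_j}, y_k d/dy_k (y^{a_j}) = a_{j,k} y^{a_j}. *)
Definition leading_term_eq (u : 'I_n -> R) (a : 'I_m -> 'I_n -> int)
    (c : 'I_m -> R[i]) (y : 'I_n -> R[i]) : Prop :=
  forall t, isLevel u t -> forall k : 'I_n, (dimAprev u t <= k < dimA u t)%N ->
    \sum_(j < m | ell j u == t) c j * (a j k)%:~R * monoZ y (a j) = 0.

Definition strongly_bulk_balanced (u : 'I_n -> R) : Prop :=
  exists (E : 'M[rat]_n) (a : 'I_m -> 'I_n -> int),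
    adapted_basis u E /\ coords E a /\
    exists (c : 'I_m -> R[i]) (y : 'I_n -> R[i]),
      (forall j, c j != 0) /\ (forall k, y k != 0) /\ leading_term_eq u a c y.

End Defs.

From HB Require Import structures.
From mathcomp Require Import all_boot all_order all_algebra.
From mathcomp Require Import reals.
From mathcomp Require Import complex.
From mathcomp Require Import ring.
Import Order.TTheory GRing.Theory Num.Theory.
Local Open Scope ring_scope.
Set Implicit Arguments. Unset Strict Implicit. Unset Printing Implicit Defensive.

(* (1) => (2): write [<mm, v_j>] in the adapted basis.  At the lowest level [t] among the
   normals not orthogonal to [mm], the lower blocks of coordinates pair to zero with [mm]
   and the higher ones vanish on level [t], so summing the leading term equations of level
   [t] against these pairings gives [sum_(ell_j = t) c_j y^(v_j) <mm, v_j> = 0]: the minimum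
   defining [Trop(P, mm)] cannot be attained only once.
   (3) => (1): if [v_j] were not in the span of the other normals of level at most
   [ell_j], normals spanning a hyperplane that contains these but not [v_j] would have a
   primitive normal vector [mm] for which [j] alone attains the minimum.  So each [v_j] is
   such a combination, which is a solution of the leading term equation at [y = 1] whose
   [j]-th coefficient is nonzero, and a generic linear combination of these solutions has
   all coefficients nonzero.  An adapted basis always exists: take a greedy basis of the
   normals sorted by level, divided by its determinant so that coordinates are integral;
   the normals span [R^n] because [P] is bounded. *)

Lemma sum_scale_rows (F : nzRingType) n (E : 'M[F]_n) (b : 'I_n -> F) :
  \sum_(k < n) b k *: row k E = (\row_k b k) *m E.
Proof. by rewrite mulmx_sum_row; apply: eq_bigr => k _; rewrite mxE. Qed.

Lemma rank_adds_row (F : fieldType) p n (A : 'M[F]_(p, n)) (w : 'rV[F]_n) :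
  ~~ (w <= A)%MS -> \rank (A + w)%MS = (\rank A).+1.
Proof.
move=> wA; apply/eqP; rewrite eqn_leq; apply/andP; split.
  have [le_rank _] := mxrank_adds_leqif A w.
  by apply: leq_trans le_rank _; rewrite -[X in (_ <= X)%N]addn1 leq_add2l rank_leq_row.
have : (A < A + w)%MS.
  rewrite ltmxEneq addsmxSl /=; apply: contra wA => AwA.
  exact: submx_trans (addsmxSr A w) AwA.
by rewrite ltmxErank => /andP [_].
Qed.

Lemma adds_row_exchange (F : fieldType) p n (A : 'M[F]_(p, n)) (w x : 'rV[F]_n) :
  ~~ (w <= A)%MS -> (w <= A + x)%MS -> (x <= A + w)%MS.
Proof.
move=> wA wAx.
have sAw : (A + w <= A + x)%MS by rewrite addsmx_sub addsmxSl.
have le_rank : (\rank (A + x)%MS <= \rank (A + w)%MS)%N.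
  have [le_rank _] := mxrank_adds_leqif A x.
  apply: leq_trans le_rank _.
  by rewrite rank_adds_row // -[X in (_ <= X)%N]addn1 leq_add2l rank_leq_row.
have [_] := mxrank_leqif_sup sAw; rewrite eqn_leq le_rank mxrankS // => /esym eqAw.
by apply: submx_trans (addsmxSr A x) _; rewrite eqAw.
Qed.

Section RowSpans.
Variables (R : realType) (n m : nat) (v : 'I_m -> 'I_n -> int).
Local Notation spanR := (spanR R v).
Local Notation vR := (vR R v).

Lemma spanR_row (S : pred 'I_m) j : row j (spanR S) = if S j then vR j else 0.
Proof. by apply/rowP => i; rewrite !mxE; case: (S j); rewrite ?mxE. Qed.

Lemma vR_sub_spanR (S : pred 'I_m) j : S j -> (vR j <= spanR S)%MS.
Proof. by move=> Sj; have := row_sub j (spanR S); rewrite spanR_row Sj. Qed.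

Lemma spanR_subP (S : pred 'I_m) p (A : 'M[R]_(p, n)) :
  (forall j, S j -> (vR j <= A)%MS) -> (spanR S <= A)%MS.
Proof.
move=> SA; apply/row_subP => j; rewrite spanR_row.
by case Sj: (S j); [apply: SA | rewrite sub0mx].
Qed.

Lemma spanRS (S T : pred 'I_m) : (forall j, S j -> T j) -> (spanR S <= spanR T)%MS.
Proof. by move=> ST; apply: spanR_subP => j /ST; apply: vR_sub_spanR. Qed.

Lemma eq_spanR (S T : pred 'I_m) : S =1 T -> spanR S = spanR T.
Proof. by move=> eqST; apply/matrixP => j i; rewrite !mxE eqST. Qed.

Lemma spanR_pred0 : spanR pred0 = 0.
Proof. by apply/matrixP => i j; rewrite !mxE. Qed.

Lemma sub_spanR_sum (S : pred 'I_m) (w : 'rV[R]_n) : (w <= spanR S)%MS ->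
  exists D : 'I_m -> R, w = \sum_(j < m | S j) D j *: vR j.
Proof.
case/submxP => D ->; exists (fun j => D 0 j).
rewrite mulmx_sum_row (bigID S) /= [X in _ + X]big1 ?addr0.
  by apply: eq_bigr => j Sj; rewrite spanR_row Sj.
by move=> j /negbTE Sj; rewrite spanR_row Sj scaler0.
Qed.

Lemma sub_spanR_mul0 (S : pred 'I_m) p q (w : 'M[R]_(n, p)) (x : 'M[R]_(q, n)) :
  (forall j, S j -> vR j *m w = 0) -> (x <= spanR S)%MS -> x *m w = 0.
Proof.
move=> Sw /submxP [D ->]; rewrite -mulmxA.
suff -> : spanR S *m w = 0 by rewrite mulmx0.
apply/row_matrixP => j; rewrite row_mul row0 spanR_row.
by case Sj: (S j); [apply: Sw | rewrite mul0mx].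
Qed.

Lemma vR_ratr j : map_mx ratr (\row_(i < n) ((v j i)%:~R : rat)) = vR j.
Proof. by apply/rowP => i; rewrite !mxE ratr_int. Qed.

Definition mcol (mm : 'I_n -> int) : 'cV[R]_n := \col_i (mm i)%:~R.

Lemma vR_mcol mm j : vR j *m mcol mm = (dotZ mm (v j))%:~R%:M.
Proof.
apply/matrixP => i0 j0; rewrite !ord1 !mxE /dotZ rmorph_sum /=.
by apply: eq_bigr => i _; rewrite !mxE intrM mulrC.
Qed.

Lemma vR_mcol_eq0 mm j : (vR j *m mcol mm == 0) = (dotZ mm (v j) == 0).
Proof.
rewrite vR_mcol -scalemx1 scalemx_eq0 oner_eq0 orbF; exact: intr_eq0.
Qed.

Lemma dotZ_full_eq0 mm : \rank (spanR predT) = n ->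
  (forall j, dotZ mm (v j) = 0) -> forall i, mm i = 0.
Proof.
move=> full mm_perp.
have span_mm : spanR predT *m mcol mm = 0.
  by apply: (sub_spanR_mul0 (S := predT)) => // j _; apply/eqP; rewrite vR_mcol_eq0 mm_perp.
have free : row_free (spanR predT)^T by rewrite /row_free mxrank_tr full.
have : (mcol mm)^T *m (spanR predT)^T == 0 by rewrite -trmx_mul span_mm trmx0.
rewrite mulmx_free_eq0 // => /eqP /matrixP mm0 i.
by have := mm0 0 i; rewrite !mxE => /eqP; rewrite intr_eq0 => /eqP.
Qed.

End RowSpans.

Lemma pairZ_lin (R : realType) n (x y : 'I_n -> R) (s : R) w :
  pairZ (fun k => x k + s * y k) w = pairZ x w + s * pairZ y w.
Proof.
rewrite /pairZ mulr_sumr -big_split /=; apply: eq_bigr => k _.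
by rewrite mulrDl mulrA.
Qed.

(* A vector orthogonal to every normal would give a line through an interior point inside P. *)
Lemma rank_spanR_full (R : realType) n m (v : 'I_m -> 'I_n -> int) (lam : 'I_m -> R) u :
  P_bounded v lam -> inIntP v lam u -> \rank (spanR R v predT) = n.
Proof.
move=> [B boundB] uP; apply/eqP; rewrite eqn_leq rank_leq_col /= leqNgt; apply/negP => lt_rank.
have : kermx (spanR R v predT)^T != 0.
  by rewrite -mxrank_eq0 mxrank_ker mxrank_tr subn_eq0 -ltnNge.
case/rowV0Pn => d /sub_kermxP dA d_neq0.
have d_perp j : pairZ (fun k => d 0 k) (v j) = 0.
  have := congr1 (fun M : 'rV[R]_m => M 0 j) dA; rewrite !mxE => <-.
  by apply: eq_bigr => k _; rewrite !mxE.
have [i di] : exists i, d 0 i != 0.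
  apply/existsP; apply: contraR d_neq0 => /existsPn d0.
  by apply/eqP/rowP => k; rewrite mxE; apply/eqP/negPn/d0.
pose s := (B - u i + 1) / d 0 i.
have inP_shift : inP v lam (fun k => u k + s * d 0 k).
  by move=> j; rewrite /ell pairZ_lin d_perp mulr0 addr0; exact: ltW (uP j).
have := le_trans (ler_norm _) (boundB _ inP_shift i).
rewrite /s divfK // (_ : u i + (B - u i + 1) = B + 1); last by ring.
by rewrite -{2}[B]addr0 lerD2l ler10.
Qed.

Section AdaptedBasis.
Variables (R : realType) (n m : nat) (v : 'I_m -> 'I_n -> int) (lam : 'I_m -> R).
Variable (u : 'I_n -> R).
Local Notation spanR := (spanR R v).
Local Notation vR := (vR R v).
Local Notation ell j := (ell v lam j u).
Local Notation isLevel := (isLevel v lam u).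
Local Notation dimA := (dimA v lam u).
Local Notation dimAprev := (dimAprev v lam u).

Lemma prev_level (t : R) : (forall j, ~~ (ell j < t)) \/
  exists t', isLevel t' /\ forall j, (ell j < t) = (ell j <= t').
Proof.
case: (pickP (fun j => ell j < t)) => [j0 lt_j0|none]; last by left => j; rewrite none.
right; have [jm lt_jm max_jm] := @arg_maxP _ _ _ j0 (fun j => ell j < t) (fun j => ell j) lt_j0.
exists (ell jm); split; first by apply/existsP; exists jm.
by move=> j; apply/idP/idP => [/max_jm //|le_j]; apply: le_lt_trans le_j lt_jm.
Qed.

Lemma dimAprev_eq0 t : (forall j, ~~ (ell j < t)) -> dimAprev t = 0%N.
Proof.
move=> none; rewrite /dimAprev (@eq_spanR _ _ _ _ _ pred0) ?spanR_pred0 ?mxrank0 //.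
by move=> j; apply/negbTE.
Qed.

Variables (E : 'M[rat]_n) (a : 'I_m -> 'I_n -> int).
Hypotheses (full : \rank (spanR predT) = n) (hE : adapted_basis v lam u E) (ha : coords v E a).

Lemma adapted_unitmx : E \in unitmx.
Proof.
case: (posnP m) => [m0|m_gt0].
  move: full; rewrite -[spanR _]trmxK mxrank_tr.
  have -> : (spanR predT)^T = 0 by apply/matrixP => i [j lt_j]; exfalso; move: lt_j; rewrite m0.
  rewrite mxrank0 => n0; rewrite unitmxE; move: E; rewrite -n0 => E0.
  by rewrite det_mx00 unitr1.
have [jm _ max_jm] := @arg_maxP _ _ _ (Ordinal m_gt0) xpredT (fun j => ell j) isT.
have lev : isLevel (ell jm) by apply/existsP; exists jm.
have dimA_top : dimA (ell jm) = n.
  by rewrite /dimA (@eq_spanR _ _ _ _ _ predT) // => j; have := max_jm j isT => /= ->.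
have [_ free] := hE lev.
rewrite -row_free_unit; apply: inj_row_free => w wE.
apply/rowP => k; rewrite mxE; apply: (free (fun k => w 0 k)) => [k'|].
  by rewrite dimA_top leqNgt ltn_ord.
by rewrite sum_scale_rows -wE; congr (_ *m _); apply/rowP => i; rewrite mxE.
Qed.

Lemma coordsM j : \row_(i < n) ((v j i)%:~R : rat) = (\row_k ((a j k)%:~R : rat)) *m E.
Proof. by rewrite ha sum_scale_rows. Qed.

Lemma coords_level_eq0 t j (k : 'I_n) :
  isLevel t -> ell j <= t -> (dimA t <= k)%N -> a j k = 0.
Proof.
move=> lev le_j le_k; have [spanE _] := hE lev.
have := (spanE (\row_(i < n) ((v j i)%:~R : rat))).1.
rewrite vR_ratr => /(_ (vR_sub_spanR _ _ le_j)) [b [b0 vjE]].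
move: vjE; rewrite sum_scale_rows coordsM => /(row_free_inj _).
rewrite row_free_unit adapted_unitmx => /(_ isT) /rowP /(_ k); rewrite !mxE b0 //.
by move/eqP; rewrite intr_eq0 => /eqP.
Qed.

Lemma coords_prev_eq0 t j (k : 'I_n) :
  isLevel t -> ell j < t -> (dimAprev t <= k)%N -> a j k = 0.
Proof.
move=> lev lt_j; case: (prev_level t) => [none|[t' [lev' eq_t']]].
  by move: (none j); rewrite lt_j.
rewrite /dimAprev (@eq_spanR R n m v _ (fun j => ell j <= t')) //.
by apply: coords_level_eq0 lev' _; rewrite -eq_t'.
Qed.

Lemma adapted_row_level t (k : 'I_n) : isLevel t -> (k < dimA t)%N ->
  (map_mx ratr (row k E) <= spanR (fun j => (ell j <= t)%R))%MS.
Proof.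
move=> lev lt_k; have [spanE _] := hE lev; apply/(spanE _).2.
exists (fun k' => (k' == k)%:R); split.
  by move=> k' le_k'; case: eqP => // ek; move: lt_k; rewrite -ek ltnNge le_k'.
rewrite (bigD1 k) //= eqxx scale1r big1 ?addr0 // => k' /negbTE ->.
by rewrite scale0r.
Qed.

Lemma adapted_row_prev t (k : 'I_n) : isLevel t -> (k < dimAprev t)%N ->
  (map_mx ratr (row k E) <= spanR (fun j => (ell j < t)%R))%MS.
Proof.
move=> lev; case: (prev_level t) => [none|[t' [lev' eq_t']]].
  by rewrite dimAprev_eq0.
rewrite /dimAprev !(@eq_spanR R n m v (fun j => ell j < t) (fun j => ell j <= t')) //.
exact: adapted_row_level.
Qed.

End AdaptedBasis.

Section LeadingTermTrop.
Variables (R : realType) (n m : nat) (v : 'I_m -> 'I_n -> int) (lam : 'I_m -> R).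
Variable (u : 'I_n -> R).
Local Notation ell j := (ell v lam j u).
Variables (E : 'M[rat]_n) (a : 'I_m -> 'I_n -> int).
Hypotheses (full : \rank (spanR R v predT) = n) (hE : adapted_basis v lam u E) (ha : coords v E a).

Definition pair_rowE (mm : 'I_n -> int) (k : 'I_n) : rat := \sum_(i < n) (mm i)%:~R * E k i.

Lemma dotZ_coords mm j :
  ((dotZ mm (v j))%:~R : rat) = \sum_(k < n) (a j k)%:~R * pair_rowE mm k.
Proof.
have vjE i : ((v j i)%:~R : rat) = \sum_(k < n) (a j k)%:~R * E k i.
  have := congr1 (fun M : 'rV[rat]_n => M 0 i) (coordsM ha j).
  by rewrite !mxE => ->; apply: eq_bigr => k _; rewrite mxE.
rewrite /dotZ rmorph_sum /=; under eq_bigr do rewrite intrM vjE mulr_sumr.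
rewrite exchange_big /=; apply: eq_bigr => k _; rewrite /pair_rowE mulr_sumr.
by apply: eq_bigr => i _; rewrite mulrCA.
Qed.

Lemma pair_rowE_prev_eq0 mm t (k : 'I_n) : isLevel v lam u t ->
  (forall j, ell j < t -> dotZ mm (v j) = 0) -> (k < dimAprev v lam u t)%N ->
  pair_rowE mm k = 0.
Proof.
move=> lev perp lt_k.
have perp_mcol j : ell j < t -> vR R v j *m mcol R mm = 0.
  by move=> lt_j; apply/eqP; rewrite vR_mcol_eq0 perp.
have := sub_spanR_mul0 perp_mcol (adapted_row_prev hE lev lt_k).
move=> /matrixP /(_ 0 0); rewrite !mxE => sum0.
apply: (fmorph_inj (@ratr R)); rewrite rmorph0 -sum0 rmorph_sum.
by apply: eq_bigr => i _; rewrite !mxE rmorphM /= ratr_int mulrC.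
Qed.

(* Expanding [<mm, v_j>] in the adapted basis, the blocks below level [t] vanish by
   orthogonality, the blocks above by triangularity, and the level-[t] block is the
   leading term equation. *)
Lemma leading_term_dotZ c y mm t : leading_term_eq v lam u a c y -> isLevel v lam u t ->
  (forall j, ell j < t -> dotZ mm (v j) = 0) ->
  \sum_(j < m | ell j == t) c j * monoZ y (a j) * (dotZ mm (v j))%:~R = 0.
Proof.
move=> eq_y lev perp.
under eq_bigr => j _ do rewrite -ratr_int dotZ_coords rmorph_sum mulr_sumr.
rewrite exchange_big /= big1 // => k _.
case: (ltnP k (dimAprev v lam u t)) => [lt_prev|le_prev].
  by rewrite big1 // => j _; rewrite (pair_rowE_prev_eq0 lev perp) // mulr0 rmorph0 mulr0.
case: (ltnP k (dimA v lam u t)) => [lt_dim|le_dim]; last first.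
  rewrite big1 // => j /eqP lev_j.
  by rewrite (coords_level_eq0 full hE ha lev _ le_dim) ?lev_j // mul0r rmorph0 mulr0.
have := eq_y t lev k; rewrite le_prev lt_dim => /(_ isT) block0.
rewrite -[RHS](mulr0 (ratr (pair_rowE mm k))) -[in RHS]block0 mulr_sumr.
by apply: eq_bigr => j _; rewrite rmorphM /= ratr_int; ring.
Qed.

End LeadingTermTrop.

Lemma monoZ_neq0 (R : realType) n (y : 'I_n -> R[i]) (b : 'I_n -> int) :
  (forall k, y k != 0) -> monoZ y b != 0.
Proof. by move=> y_neq0; apply/prodf_neq0 => k _; apply: expfz_neq0. Qed.

Lemma bulk_balanced_in_trop (R : realType) n m (v : 'I_m -> 'I_n -> int) (lam : 'I_m -> R) u :
  \rank (spanR R v predT) = n -> strongly_bulk_balanced v lam u ->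
  forall mm, in_trop v lam mm u.
Proof.
move=> full [E [a [hE [ha [c [y [c_neq0 [y_neq0 eq_y]]]]]]]] mm.
case: (pickP (fun i => mm i != 0)) => [i0 mm_i0|mm0]; last first.
  by left => i; apply/eqP/negbNE; rewrite mm0.
right; have [jw dot_jw] : exists j, dotZ mm (v j) != 0.
  apply/existsP; apply: contraLR mm_i0 => /existsPn perp.
  by apply/negPn/eqP; apply: (dotZ_full_eq0 full) => j; apply/eqP/negPn/perp.
have [j0 dot_j0 min_j0] :=
  @arg_minP _ _ _ jw (fun j => dotZ mm (v j) != 0) (fun j => ell v lam j u) dot_jw.
case: (pickP (fun j => [&& j != j0, dotZ mm (v j) != 0 & ell v lam j u == ell v lam j0 u]))
  => [j1 /and3P [j1_neq dot_j1 /eqP ell_j1]|none].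
  by exists j0, j1; split => //; rewrite eq_sym.
have lev : isLevel v lam u (ell v lam j0 u) by apply/existsP; exists j0.
have perp j : ell v lam j u < ell v lam j0 u -> dotZ mm (v j) = 0.
  by move=> lt_j; apply/eqP/negbNE/negP => /min_j0; rewrite leNgt lt_j.
have := leading_term_dotZ full hE ha eq_y lev perp.
rewrite (bigD1 j0) //= big1 ?addr0; last first.
  move=> j /andP [/eqP ell_j j_neq]; case: (eqVneq (dotZ mm (v j)) 0) => [->|dot_j].
    by rewrite mulr0.
  by move: (none j); rewrite j_neq dot_j ell_j eqxx.
move/eqP; rewrite !mulf_eq0 (negbTE (c_neq0 j0)) (negbTE (monoZ_neq0 _ y_neq0)).
by rewrite intr_eq0 (negbTE dot_j0).
Qed.

Lemma row_pid_mul (F : nzRingType) n d (E : 'M[F]_n) (k : 'I_n) :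
  row k (pid_mx d *m E) = if (k < d)%N then row k E else 0.
Proof.
apply/rowP => i; rewrite !mxE (bigD1 k) //= big1 ?addr0.
  by rewrite mxE eqxx /=; case: (k < d)%N; rewrite ?mul1r ?mul0r ?mxE.
by move=> k' k'_neq; rewrite mxE -[(_ == _ :> nat)]/(k == k') eq_sym (negbTE k'_neq) mul0r.
Qed.

Section AdaptedBasisOfRows.
Variables (R : realType) (n m : nat) (v : 'I_m -> 'I_n -> int) (lam : 'I_m -> R).
Variable (u : 'I_n -> R).
Local Notation spanR := (spanR R v).
Local Notation vR := (vR R v).
Local Notation ell j := (ell v lam j u).
Local Notation dimA := (dimA v lam u).

Lemma adapted_basis_of (E : 'M[rat]_n) : E \in unitmx ->
  (forall t (k : 'I_n), (k < dimA t)%N ->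
     (map_mx ratr (row k E) <= spanR (fun j => (ell j <= t)%R))%MS) ->
  adapted_basis v lam u E.
Proof.
move=> unitE rowE t _; split; last first.
  move=> b _; rewrite sum_scale_rows => /eqP.
  rewrite mulmx_free_eq0 ?row_free_unit // => /eqP /rowP b0 k.
  by have := b0 k; rewrite !mxE.
move=> q; split; last first.
  move=> [b [b0 ->]]; rewrite sum_scale_rows map_mxM mulmx_sum_row.
  apply: summx_sub => k _; rewrite mxE; case: (ltnP k (dimA t)) => lt_k.
    by apply: scalemx_sub; rewrite -map_row; apply: rowE.
  by rewrite [(\row_k0 _) 0 k]mxE b0 // rmorph0 scale0r sub0mx.
move=> q_sub; set d := dimA t; pose Ed : 'M[rat]_n := pid_mx d *m E.
have Ed_sub : (map_mx ratr Ed <= spanR (fun j => (ell j <= t)%R))%MS.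
  apply/row_subP => k; rewrite -map_row row_pid_mul; case: ifP => lt_k.
    exact: rowE.
  by rewrite map_mx0 sub0mx.
have rank_Ed : \rank (map_mx (@ratr R) Ed) = d.
  rewrite (mxrank_map (@ratr R)) /Ed mxrankMfree ?row_free_unit //.
  by rewrite rank_pid_mx // /d /dimA rank_leq_col.
have := mxrank_leqif_sup Ed_sub; rewrite rank_Ed => -[_]; rewrite /d /dimA eqxx => /esym eq_Ed.
have : (q <= Ed)%MS by rewrite -(map_submx (@ratr R)) (submx_trans q_sub eq_Ed).
case/submxP => w ->; exists (fun k => (w *m pid_mx d) 0 k); split.
  move=> k le_k; rewrite mxE big1 // => i _; rewrite mxE.
  case: eqP => [ei|]; last by rewrite mulr0.
  by rewrite ei /d /dimA ltnNge le_k mulr0.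
rewrite sum_scale_rows /Ed mulmxA; congr mulmx.
by apply/matrixP => i k; rewrite (ord1 i) [in RHS]mxE.
Qed.

Variable (b : 'I_n -> 'I_m).
Hypotheses (full : \rank (spanR predT) = n)
  (b_span : (spanR predT <= \matrix_(r < n) vR (b r))%MS)
  (b_level : forall t (r : 'I_n), (r < dimA t)%N -> ell (b r) <= t).

(* The rows of [E] are the [v_(b r)] divided by the determinant [d]; Cramer's rule
   [v adj(EZ) EZ = d v] then makes all coordinates integral. *)
Lemma exists_adapted_basis_of_rows : exists E a, adapted_basis v lam u E /\ coords v E a.
Proof.
pose EZ : 'M[int]_n := \matrix_(r, i) v (b r) i.
pose E0 : 'M[rat]_n := map_mx intr EZ.
have rowE0 r : map_mx (@ratr R) (row r E0) = vR (b r).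
  by apply/rowP => i; rewrite !mxE ratr_int.
have unitE0 : E0 \in unitmx.
  rewrite -row_full_unit -(row_full_map (@ratr R)) /row_full.
  apply/eqP/anti_leq; rewrite rank_leq_col /=.
  have -> : map_mx (@ratr R) E0 = \matrix_(r < n) vR (b r).
    by apply/row_matrixP => r; rewrite rowK -rowE0 map_row.
  by rewrite -[X in (X <= _)%N]full mxrankS.
set d := \det EZ.
have d_neq0 : (d%:~R : rat) != 0.
  by move: unitE0; rewrite unitmxE /E0 (det_map_mx (intr : int -> rat)) unitfE.
exists ((d%:~R : rat)^-1 *: E0), (fun j k => \sum_(i < n) v j i * \adj EZ i k); split.
  apply: adapted_basis_of; first by rewrite unitmxZ // unitfE invr_eq0.
  move=> t k lt_k; have -> : row k ((d%:~R : rat)^-1 *: E0) = (d%:~R : rat)^-1 *: row k E0.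
    by apply/rowP => i; rewrite !mxE.
  by rewrite map_mxZ rowE0 scalemx_sub // vR_sub_spanR // b_level.
move=> j; rewrite sum_scale_rows.
pose vz : 'rV[int]_n := \row_i v j i.
have -> : \row_k ((\sum_(i < n) v j i * \adj EZ i k)%:~R : rat) = map_mx intr (vz *m \adj EZ).
  apply/rowP => k; rewrite !mxE rmorph_sum [RHS]rmorph_sum.
  by apply: eq_bigr => i _; rewrite !mxE.
rewrite -scalemxAr map_mxM map_mx_adj -mulmxA mul_adj_mx -/E0.
rewrite (det_map_mx (intr : int -> rat)) -/d mul_mx_scalar scalerA mulVf // scale1r.
by apply/rowP => i; rewrite !mxE.
Qed.

End AdaptedBasisOfRows.

Section GreedyBasis.
Variables (R : realType) (n m : nat) (v : 'I_m -> 'I_n -> int) (lam : 'I_m -> R).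
Variable (u : 'I_n -> R).
Local Notation spanR := (spanR R v).
Local Notation vR := (vR R v).
Local Notation ell j := (ell v lam j u).

Definition prec (i j : 'I_m) : bool := (ell i < ell j) || ((ell i == ell j) && (i < j)%N).

Lemma prec_irr i : ~~ prec i i.
Proof. by rewrite /prec ltxx eqxx ltnn. Qed.

Lemma prec_le i j : prec i j -> ell i <= ell j.
Proof. by case/orP => [/ltW //| /andP [/eqP -> _]]. Qed.

Lemma prec_trans i j k : prec i j -> prec j k -> prec i k.
Proof.
rewrite /prec => /orP [lt_ij|/andP [/eqP eq_ij lt_ij]] /orP [lt_jk|/andP [/eqP eq_jk lt_jk]].
- by rewrite (lt_trans lt_ij lt_jk).
- by rewrite -eq_jk lt_ij.
- by rewrite eq_ij lt_jk.
- by rewrite eq_ij eq_jk eqxx (ltn_trans lt_ij lt_jk) orbT.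
Qed.

Lemma prec_total i j : i != j -> prec i j || prec j i.
Proof.
move=> neq_ij; rewrite /prec; case: (ltgtP (ell i) (ell j)) => //= _.
by case: (ltngtP i j) => // /val_inj eq_ij; rewrite eq_ij eqxx in neq_ij.
Qed.

Definition greedy : {set 'I_m} := [set j | ~~ (vR j <= spanR (prec^~ j))%MS].

Lemma card_prec_lt i j : prec i j -> (#|[set k | prec k i]| < #|[set k | prec k j]|)%N.
Proof.
move=> ij; apply: proper_card; apply/properP; split.
  by apply/subsetP => k; rewrite !inE => /prec_trans; apply.
by exists i; rewrite !inE ?ij ?prec_irr.
Qed.

Lemma vR_sub_greedy j : (vR j <= spanR (fun i => (i \in greedy) && ((i == j) || prec i j)))%MS.
Proof.
elim: {j}_.+1 {-2}j (ltnSn #|[set k | prec k j]|) => [//|N IH] j lt_j.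
case greedy_j: (j \in greedy); first by apply: vR_sub_spanR; rewrite greedy_j eqxx.
move: greedy_j; rewrite inE => /negbFE /submx_trans; apply; apply: spanR_subP => i ij.
apply: submx_trans (IH i (leq_trans (card_prec_lt ij) lt_j)) _.
apply: spanRS => k /andP [-> /orP [/eqP ->|ki]]; first by rewrite ij orbT.
by rewrite (prec_trans ki ij) orbT.
Qed.

Lemma spanR_sub_greedy (T : pred 'I_m) : (forall i j, prec i j -> T j -> T i) ->
  (spanR T <= spanR (fun i => (i \in greedy) && T i))%MS.
Proof.
move=> T_down; apply: spanR_subP => j Tj; apply: submx_trans (vR_sub_greedy j) _.
by apply: spanRS => i /andP [-> /orP [/eqP -> //|ij]]; exact: T_down ij Tj.
Qed.

(* Removing the [prec]-largest element [x] of [T] leaves vectors preceding [x], whose span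
   does not contain [v_x] by greediness. *)
Lemma rank_spanR_greedy (T : {set 'I_m}) : T \subset greedy ->
  \rank (spanR (fun i => i \in T)) = #|T|.
Proof.
elim: {T}_.+1 {-2}T (ltnSn #|T|) => [//|N IH] T lt_T T_greedy.
case: (set_0Vmem T) => [->|[x0 Tx0]].
  by rewrite (@eq_spanR R n m v _ pred0) ?spanR_pred0 ?mxrank0 ?cards0 // => i; rewrite inE.
have [x Tx max_x] := @arg_maxP _ _ _ x0 (fun i => i \in T) (fun j => #|[set k | prec k j]|) Tx0.
have x_max i : i \in T :\ x -> prec i x.
  rewrite !inE => /andP [ix Ti]; case/orP: (prec_total ix) => // xi.
  by have := max_x i Ti; rewrite /= leEnat leqNgt card_prec_lt.
set spanT := spanR (fun i => i \in T); pose spanTx := spanR (fun i => i \in T :\ x).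
have eq_span : (spanT == spanTx + vR x)%MS.
  apply/andP; split.
    apply: spanR_subP => j Tj; case: (eqVneq j x) => [->|jx]; first exact: addsmxSr.
    by apply: submx_trans (addsmxSl _ _); apply: vR_sub_spanR; rewrite !inE jx.
  rewrite addsmx_sub vR_sub_spanR // andbT.
  by apply: spanRS => j; rewrite !inE => /andP [].
have card_T : #|T| = #|T :\ x|.+1 by rewrite (cardsD1 x) Tx.
rewrite (eqmx_rank eq_span) rank_adds_row.
  rewrite [RHS]card_T IH //; first by rewrite -ltnS -card_T.
  by apply: subset_trans T_greedy; apply: subsetDl.
have := subsetP T_greedy x Tx; rewrite inE; apply: contra => /submx_trans; apply.
exact: spanRS.
Qed.

Lemma card_greedy_down (T : pred 'I_m) : (forall i j, prec i j -> T j -> T i) ->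
  #|[set i in greedy | T i]| = \rank (spanR T).
Proof.
move=> T_down; rewrite -rank_spanR_greedy; last by apply/subsetP => i; rewrite inE => /andP [].
apply: eqmx_rank; apply/andP; split.
  by apply: spanRS => i; rewrite inE => /andP [].
by apply: submx_trans (spanR_sub_greedy T_down) _; apply: spanRS => i Ti; rewrite inE.
Qed.

Hypothesis full : \rank (spanR predT) = n.

Lemma card_greedy : #|greedy| = n.
Proof.
rewrite -full -(card_greedy_down (T := predT)) //.
by apply: eq_card => i; rewrite inE andbT.
Qed.

Lemma card_greedy_level t : #|[set i in greedy | (ell i <= t)%R]| = dimA v lam u t.
Proof. by apply: card_greedy_down => i j /prec_le; apply: le_trans. Qed.

Definition greedy_index j := #|[set i in greedy | prec i j]|.

Lemma greedy_index_lt i j : i \in greedy -> prec i j -> (greedy_index i < greedy_index j)%N.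
Proof.
move=> greedy_i ij; apply: proper_card; apply/properP; split.
  by apply/subsetP => k; rewrite !inE => /andP [-> /prec_trans]; apply.
exists i; first by rewrite inE greedy_i ij.
by rewrite inE (negbTE (prec_irr i)) andbF.
Qed.

Lemma greedy_index_ltn j : j \in greedy -> (greedy_index j < n)%N.
Proof.
move=> greedy_j; rewrite -card_greedy; apply: proper_card; apply/properP; split.
  by apply/subsetP => i; rewrite inE => /andP [].
by exists j => //; rewrite inE (negbTE (prec_irr j)) andbF.
Qed.

Lemma greedy_index_inj : {in greedy &, injective greedy_index}.
Proof.
move=> i j greedy_i greedy_j eq_ij; apply/eqP/negPn/negP => /prec_total /orP [] lt.
  by move: (greedy_index_lt greedy_i lt); rewrite eq_ij ltnn.
by move: (greedy_index_lt greedy_j lt); rewrite eq_ij ltnn.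
Qed.

Lemma greedy_index_onto (r : 'I_n) : exists2 j, j \in greedy & greedy_index j = r.
Proof.
pose s := [seq greedy_index j | j <- enum greedy].
have uniq_s : uniq s.
  by rewrite map_inj_in_uniq ?enum_uniq // => i j; rewrite !mem_enum; exact: greedy_index_inj.
have sub_s : {subset s <= iota 0 n}.
  by move=> x /mapP [j]; rewrite mem_enum => greedy_j ->; rewrite mem_iota greedy_index_ltn.
have size_s : (size (iota 0 n) <= size s)%N by rewrite size_iota size_map -cardE card_greedy.
have [_ eq_s] := uniq_min_size uniq_s sub_s size_s.
have : val r \in s by rewrite eq_s mem_iota ltn_ord.
by case/mapP => j; rewrite mem_enum => greedy_j ->; exists j.
Qed.

Lemma exists_level_sorted_rows : exists b : 'I_n -> 'I_m,
  (spanR predT <= \matrix_(r < n) vR (b r))%MS /\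
  forall t (r : 'I_n), (r < dimA v lam u t)%N -> ell (b r) <= t.
Proof.
have /fin_all_exists [b bP] : forall r : 'I_n, exists j, (j \in greedy) && (greedy_index j == r).
  by move=> r; have [j greedy_j jr] := greedy_index_onto r; exists j; rewrite greedy_j jr eqxx.
have greedy_b r : b r \in greedy by case/andP: (bP r).
have index_b r : greedy_index (b r) = r by case/andP: (bP r) => _ /eqP.
exists b; split.
  apply: submx_trans (spanR_sub_greedy (T := predT) _) _ => //.
  apply: spanR_subP => j /andP [greedy_j _].
  pose r := Ordinal (greedy_index_ltn greedy_j).
  have <- : b r = j by apply: greedy_index_inj => //; rewrite index_b.
  by have := row_sub r (\matrix_(r < n) vR (b r)); rewrite rowK.
move=> t r lt_r; rewrite leNgt; apply/negP => lt_t.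
have : [set i in greedy | (ell i <= t)%R] \subset [set i in greedy | prec i (b r)].
  apply/subsetP => i; rewrite !inE => /andP [-> le_i].
  by rewrite /prec (le_lt_trans le_i lt_t).
by move/subset_leq_card; rewrite card_greedy_level -/(greedy_index (b r)) index_b leqNgt lt_r.
Qed.

End GreedyBasis.

Lemma exists_adapted_basis (R : realType) n m (v : 'I_m -> 'I_n -> int) (lam : 'I_m -> R) u :
  \rank (spanR R v predT) = n -> exists E a, adapted_basis v lam u E /\ coords v E a.
Proof.
move=> full; have [b [b_span b_level]] := exists_level_sorted_rows lam u full.
exact: exists_adapted_basis_of_rows full b_span b_level.
Qed.

Section PrimitivePart.
Variable n : nat.
Implicit Types z : 'I_n -> int.

Definition content z : nat := \big[gcdn/0%N]_(k < n) `|z k|%N.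

Definition primitive_part z (k : 'I_n) : int := (z k %/ (content z)%:Z)%Z.

Lemma content_dvdz z k : ((content z)%:Z %| z k)%Z.
Proof. by rewrite dvdzE /content (biggcdn_inf k). Qed.

Lemma primitive_partK z k : primitive_part z k * (content z)%:Z = z k.
Proof. exact/divzK/content_dvdz. Qed.

Lemma content_gt0 z k : z k != 0 -> (0 < content z)%N.
Proof.
move=> zk_neq0; rewrite lt0n; apply: contra zk_neq0 => /eqP c0.
by rewrite -primitive_partK c0 mulr0.
Qed.

Lemma primitive_part_primitive z k : z k != 0 -> primitiveZ (primitive_part z).
Proof.
move=> zk_neq0 d d_dvd; have c_gt0 := content_gt0 zk_neq0.
suff : (d * content z %| 1 * content z)%N by rewrite dvdn_pmul2r // dvdn1 => /eqP.
rewrite mul1n; apply/dvdn_biggcdP => i _.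
by rewrite -(primitive_partK z i) abszM dvdn_mul //; apply: d_dvd.
Qed.

Lemma primitiveZ_neq0 z : primitiveZ z -> exists k, z k != 0.
Proof.
move=> prim_z; case: (pickP (fun k => z k != 0)) => [k zk_neq0|z0]; first by exists k.
have z_dvd i : (0%:Z %| z i)%Z by move/negbFE/eqP: (z0 i) => ->; rewrite dvdz0.
by have := prim_z 0%N z_dvd.
Qed.

End PrimitivePart.

Section Hyperplanes.
Variables (R : realType) (n m : nat) (v : 'I_m -> 'I_n -> int).
Local Notation spanR := (spanR R v).
Local Notation vR := (vR R v).

(* A rational kernel vector, scaled by the product of the denominators of its entries. *)
Lemma exists_int_normal (J : pred 'I_m) : \rank (spanR J) = n.-1 -> (0 < n)%N ->
  exists z : 'I_n -> int, (exists k, z k != 0) /\ forall i, J i -> dotZ z (v i) = 0.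
Proof.
move=> rank_J n_gt0.
pose Aq : 'M[rat]_(m, n) := \matrix_(i, k) (if J i then (v i k)%:~R else 0).
have rank_Aq : \rank Aq = n.-1.
  rewrite -(mxrank_map (@ratr R)) -rank_J; congr (\rank _).
  by apply/matrixP => i k; rewrite !mxE; case: (J i); rewrite ?rmorph_int ?rmorph0.
have : kermx Aq^T != 0.
  by rewrite -mxrank_eq0 mxrank_ker mxrank_tr rank_Aq subn_eq0 -ltnNge prednK.
case/rowV0Pn => w /sub_kermxP w_ker w_neq0.
have [k0 wk0] : exists k, w 0 k != 0.
  apply/existsP; apply: contraR w_neq0 => /existsPn w0.
  by apply/eqP/rowP => k; rewrite mxE; apply/eqP/negPn/w0.
pose z k := numq (w 0 k) * \prod_(k' < n | k' != k) denq (w 0 k').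
pose D : rat := \prod_(k < n) (denq (w 0 k))%:~R.
have D_neq0 : D != 0 by apply/prodf_neq0 => k _; rewrite intr_eq0 denq_neq0.
have zE k : ((z k)%:~R : rat) = D * w 0 k.
  rewrite /z /D intrM rmorph_prod [in RHS](bigD1 k) //=.
  have -> : ((numq (w 0 k))%:~R : rat) = (denq (w 0 k))%:~R * w 0 k.
    by rewrite -[X in _ = _ * X](divq_num_den (w 0 k)) mulrC divfK // intr_eq0 denq_neq0.
  by rewrite -!mulrA; congr (_ * _); rewrite mulrC.
exists z; split; first by exists k0; rewrite -(intr_eq0 rat) zE mulf_neq0.
move=> i Ji; apply/eqP; rewrite -(intr_eq0 rat) /dotZ rmorph_sum /=.
have := congr1 (fun M : 'rV[rat]_m => M 0 i) w_ker; rewrite !mxE => w_perp.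
apply/eqP; rewrite -[RHS](mulr0 D) -[in RHS]w_perp mulr_sumr; apply: eq_bigr => k _.
by rewrite intrM zE !mxE Ji mulrA.
Qed.
Lemma exists_primitive_normal (J : pred 'I_m) : \rank (spanR J) = n.-1 -> (0 < n)%N ->
  exists z : 'I_n -> int, primitiveZ z /\ forall i, J i -> dotZ z (v i) = 0.
Proof.
move=> rank_J n_gt0; have [z [[k zk_neq0] z_perp]] := exists_int_normal rank_J n_gt0.
exists (primitive_part z); split; first exact: primitive_part_primitive zk_neq0.
have c_neq0 : (content z)%:Z != 0 by rewrite eqz_nat -lt0n (content_gt0 zk_neq0).
move=> i Ji; have := z_perp i Ji; rewrite /dotZ.
under eq_bigr do rewrite -[z _](primitive_partK z) mulrAC.
by rewrite -mulr_suml => /eqP; rewrite mulf_eq0 (negbTE c_neq0) orbF => /eqP.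
Qed.

Hypothesis full : \rank (spanR predT) = n.

(* A largest [J] containing [S] and avoiding [v_j] spans a complement of [v_j]. *)
Lemma exists_hyperplane_avoiding (S : pred 'I_m) j : ~~ (vR j <= spanR S)%MS ->
  exists J : pred 'I_m,
    [/\ forall i, S i -> J i, ~~ (vR j <= spanR J)%MS & \rank (spanR J) = n.-1].
Proof.
move=> j_notin_S.
pose spanJ (J : {set 'I_m}) := spanR (fun i => i \in J).
pose avoids (J : {set 'I_m}) := [forall i, S i ==> (i \in J)] && ~~ (vR j <= spanJ J)%MS.
have avoids_S : avoids [set i | S i].
  apply/andP; split; first by apply/forallP => i; apply/implyP; rewrite inE.
  by rewrite /spanJ (@eq_spanR R n m v _ S) // => i; rewrite inE.
have [Jm /andP [/forallP S_Jm j_notin_Jm] max_Jm] :=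
  @arg_maxP _ _ _ _ avoids (fun J => #|J|) avoids_S.
set A := spanJ Jm.
have span_Aj i : (vR i <= A + vR j)%MS.
  case: (boolP (i \in Jm)) => Jm_i.
    by apply: submx_trans (addsmxSl _ _); apply: vR_sub_spanR.
  apply: adds_row_exchange => //.
  have : ~~ avoids (i |: Jm).
    by apply/negP => /max_Jm; rewrite /= leEnat cardsU1 Jm_i ltnn.
  rewrite negb_and negbK => /orP [/forallPn [x]|/submx_trans]; last apply.
    by rewrite negb_imply => /andP [Sx]; rewrite !inE (implyP (S_Jm x) Sx) orbT.
  apply: spanR_subP => x; rewrite !inE => /orP [/eqP ->|Jm_x]; first exact: addsmxSr.
  by apply: submx_trans (addsmxSl _ _); apply: vR_sub_spanR.
have rank_Aj : \rank (A + vR j)%MS = (\rank A).+1 by rewrite rank_adds_row.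
exists (fun i => i \in Jm); split => //.
  by move=> i Si; apply: (implyP (S_Jm i)).
apply/eqP; rewrite -eqSS prednK; last first.
  by apply: leq_trans (rank_leq_col (A + vR j)%MS); rewrite rank_Aj.
rewrite -rank_Aj eqn_leq rank_leq_col -[X in (X <= _)%N]full mxrankS //.
by apply: spanR_subP => i _.
Qed.

Lemma dotZ_normal_neq0 (J : pred 'I_m) j z :
  \rank (spanR J) = n.-1 -> ~~ (vR j <= spanR J)%MS -> (exists k, z k != 0) ->
  (forall i, J i -> dotZ z (v i) = 0) -> dotZ z (v j) != 0.
Proof.
move=> rank_J j_notin_J [k zk_neq0] z_perp; apply: contra zk_neq0 => /eqP zj_perp.
have n_gt0 : (0 < n)%N.
  by apply: leq_trans (rank_leq_col (spanR J + vR j)%MS); rewrite rank_adds_row.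
have full_Jj : row_full (spanR J + vR j)%MS.
  by rewrite /row_full rank_adds_row // rank_J prednK.
have ker_Jj : (spanR J + vR j <= kermx (mcol R z))%MS.
  rewrite addsmx_sub; apply/andP; split; last by apply/sub_kermxP/eqP; rewrite vR_mcol_eq0 zj_perp.
  by apply/sub_kermxP/(sub_spanR_mul0 (S := J)) => // i Ji; apply/eqP; rewrite vR_mcol_eq0 z_perp.
apply/eqP; move: k; apply: dotZ_full_eq0 full _ => i; apply/eqP; rewrite -(vR_mcol_eq0 R).
by apply/eqP/sub_kermxP; apply: submx_trans ker_Jj; apply: submx_full.
Qed.

End Hyperplanes.

Section TropBalanced.
Variables (R : realType) (n m : nat) (v : 'I_m -> 'I_n -> int) (lam : 'I_m -> R).
Variable (u : 'I_n -> R).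
Local Notation spanR := (spanR R v).
Local Notation vR := (vR R v).
Local Notation ell j := (ell v lam j u).
Hypothesis full : \rank (spanR predT) = n.

Definition below j i := (ell i < ell j) || ((ell i == ell j) && (i != j)).

Lemma vR_sub_below
    (trop : forall mm : 'I_n -> int, primitiveZ mm ->
       (exists J : pred 'I_m, \rank (spanR J) = n.-1 /\ forall j, J j -> dotZ mm (v j) = 0) ->
       in_trop v lam mm u) j :
  (vR j <= spanR (below j))%MS.
Proof.
apply/negPn/negP => j_notin.
have [J [below_J j_notin_J rank_J]] := exists_hyperplane_avoiding full j_notin.
have n_gt0 : (0 < n)%N.
  by apply: leq_trans (rank_leq_col (spanR J + vR j)%MS); rewrite rank_adds_row.
have [mm [prim_mm mm_perp]] := exists_primitive_normal rank_J n_gt0.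
have mm_neq0 := primitiveZ_neq0 prim_mm.
have dot_j := dotZ_normal_neq0 full rank_J j_notin_J mm_neq0 mm_perp.
have only_j x : dotZ mm (v x) != 0 -> ell x <= ell j -> x = j.
  move=> dot_x le_x; apply/eqP/negPn/negP => x_neq.
  move: dot_x; rewrite mm_perp ?eqxx //; apply: below_J.
  by move: le_x; rewrite le_eqVlt /below x_neq andbT orbC.
case: (trop mm prim_mm (ex_intro _ J (conj rank_J mm_perp))) => [mm0|].
  by case: mm_neq0 => k; rewrite mm0 eqxx.
move=> [j1 [j2 [j12 dot_j1 dot_j2 ell12 min_j1]]].
have le_j1 := min_j1 j dot_j.
by move: j12; rewrite (only_j _ dot_j1 le_j1) (only_j _ dot_j2) ?eqxx // -ell12.
Qed.

End TropBalanced.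

Lemma addr_scale_neq0 (F : realFieldType) (c r s : F) :
  r != 0 -> `|c / r| < s -> c + s * r != 0.
Proof.
move=> r_neq0 lt_s; apply/eqP => csr0.
have s_eq : s = - (c / r).
  by apply: (mulIf r_neq0); rewrite mulNr divfK //; apply/eqP; rewrite -addr_eq0 addrC csr0.
by move: lt_s; rewrite s_eq => /lt_le_trans /(_ (ler_norm _)); rewrite normrN ltxx.
Qed.

Lemma exists_nowhere_zero (F : realFieldType) m (K : ('I_m -> F) -> Prop) :
  K (fun _ => 0) -> (forall x y s, K x -> K y -> K (fun i => x i + s * y i)) ->
  (forall j, exists r, K r /\ r j != 0) -> exists c, K c /\ forall j, c j != 0.
Proof.
move=> K0 K_comb K_j.
suff nonzero_below N : (N <= m)%N -> exists c, K c /\ forall j : 'I_m, (j < N)%N -> c j != 0.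
  by have [c [Kc c_neq0]] := nonzero_below m (leqnn m); exists c; split => // j; apply: c_neq0.
elim: N => [|N IH] le_N; first by exists (fun _ => 0).
have [c [Kc c_neq0]] := IH (ltnW le_N).
have [r [Kr rN_neq0]] := K_j (Ordinal le_N).
pose s := 1 + \sum_(i < m) `|c i / r i|.
have lt_s i : `|c i / r i| < s.
  by rewrite ltr_pwDl ?ltr01 // (bigD1 i) //= lerDl sumr_ge0.
exists (fun i => c i + s * r i); split; first exact: K_comb.
move=> j; rewrite ltnS leq_eqVlt => /orP [/eqP jN|lt_j].
  have -> : j = Ordinal le_N by apply: val_inj.
  exact: addr_scale_neq0.
have [-> | ri_neq0] := eqVneq (r j) 0; first by rewrite mulr0 addr0 c_neq0.
exact: addr_scale_neq0.
Qed.

Section BlockRelations.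
Variables (R : realType) (n m : nat) (v : 'I_m -> 'I_n -> int) (lam : 'I_m -> R).
Variable (u : 'I_n -> R).
Local Notation spanR := (spanR R v).
Local Notation vR := (vR R v).
Local Notation ell j := (ell v lam j u).
Variables (E : 'M[rat]_n) (a : 'I_m -> 'I_n -> int).
Hypotheses (full : \rank (spanR predT) = n) (hE : adapted_basis v lam u E) (ha : coords v E a).

(* The leading term equation at [y = 1], read as linear equations on the coefficients. *)
Definition block_relation (r : 'I_m -> R) : Prop :=
  forall t, isLevel v lam u t -> forall k : 'I_n,
    (dimAprev v lam u t <= k < dimA v lam u t)%N ->
    \sum_(i < m | ell i == t) r i * (a i k)%:~R = 0.

Lemma block_relation0 : block_relation (fun _ => 0).
Proof. by move=> t _ k _; apply: big1 => i _; rewrite mul0r. Qed.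

Lemma block_relation_comb x y s : block_relation x -> block_relation y ->
  block_relation (fun i => x i + s * y i).
Proof.
move=> rel_x rel_y t lev k k_block; under eq_bigr do rewrite mulrDl -mulrA.
by rewrite big_split /= -mulr_sumr rel_x // rel_y // mulr0 addr0.
Qed.

Lemma coords_sub_spanR (S : pred 'I_m) j : (vR j <= spanR S)%MS ->
  exists D : 'I_m -> R,
    forall k, ((a j k)%:~R : R) = \sum_(i < m | S i) D i * (a i k)%:~R.
Proof.
case/sub_spanR_sum => D vjD; exists D.
have freeE : row_free (map_mx (@ratr R) E).
  by rewrite row_free_unit map_unitmx (adapted_unitmx full hE).
have vRE x : vR x = (\row_k ((a x k)%:~R : R)) *m map_mx (@ratr R) E.
  rewrite -vR_ratr (coordsM ha) map_mxM; congr (_ *m _).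
  by apply/rowP => k; rewrite !mxE rmorph_int.
have : \row_k ((a j k)%:~R : R) = \sum_(i < m | S i) D i *: \row_k ((a i k)%:~R : R).
  apply: (row_free_inj freeE).
  by rewrite -vRE vjD mulmx_suml; apply: eq_bigr => i _; rewrite vRE scalemxAl.
by move/rowP => aj k; have := aj k; rewrite mxE summxE => ->; apply: eq_bigr => i _; rewrite !mxE.
Qed.

(* A dependence [v_j = sum_(i below j) D_i v_i] gives the relation [e_j - sum D_i e_i] on
   the level of [j]; the lower levels drop out because their coordinates vanish there. *)
Lemma exists_block_relation (bal : forall j, (vR j <= spanR (below v lam u j))%MS) j :
  exists r, block_relation r /\ r j != 0.
Proof.
have [D aD] := coords_sub_spanR (bal j).
pose r i := if i == j then 1 else if ell i == ell j then - D i else 0.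
exists r; split; last by rewrite /r eqxx oner_neq0.
move=> t lev k /andP [le_k lt_k].
case: (eqVneq (ell j) t) => [ell_j|neq_t]; last first.
  apply: big1 => i /eqP ell_i; rewrite /r ell_i [t == _]eq_sym (negbTE neq_t).
  case: eqVneq => [ij|_]; last by rewrite mul0r.
  by move: neq_t; rewrite -ij ell_i eqxx.
rewrite -ell_j (bigD1 j) //= /r eqxx mul1r aD.
rewrite (bigID (fun i => ell i < ell j)) /= big1 ?add0r; last first.
  move=> i /andP [_ lt_i].
  by rewrite (coords_prev_eq0 full hE ha lev _ le_k) ?mulr0z ?mulr0 // -ell_j.
have same_level i : below v lam u j i && ~~ (ell i < ell j) = (ell i == ell j) && (i != j).
  by rewrite /below; case: (ltgtP (ell i) (ell j)) => //= _; rewrite andbT.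
rewrite (eq_bigl _ _ same_level) -big_split big1 //= => i /andP [/eqP ell_i ij].
by rewrite (negbTE ij) ell_i eqxx mulNr addrN.
Qed.

End BlockRelations.

Lemma trop_bulk_balanced (R : realType) n m (v : 'I_m -> 'I_n -> int) (lam : 'I_m -> R) u :
  \rank (spanR R v predT) = n ->
  (forall mm : 'I_n -> int, primitiveZ mm ->
    (exists J : pred 'I_m, \rank (spanR R v J) = n.-1 /\ forall j, J j -> dotZ mm (v j) = 0) ->
    in_trop v lam mm u) ->
  strongly_bulk_balanced v lam u.
Proof.
move=> full trop; have [E [a [hE ha]]] := exists_adapted_basis lam u full.
have [c [rel_c c_neq0]] := exists_nowhere_zero (@block_relation0 _ _ _ v lam u a)
  (@block_relation_comb _ _ _ v lam u a)
  (exists_block_relation full hE ha (vR_sub_below full trop)).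
exists E, a; split => //; split => //.
exists (fun j => real_complex R (c j)), (fun _ => 1); split.
  by move=> j; rewrite fmorph_eq0.
split=> [k|t lev k k_block]; first exact: oner_neq0.
rewrite -[RHS](rmorph0 (real_complex R)) -(rel_c t lev k k_block) rmorph_sum.
apply: eq_bigr => j _; rewrite /monoZ big1 ?mulr1; last by move=> i _; rewrite exp1rz.
by rewrite rmorphM /= rmorph_int.
Qed.

Theorem theoremA (R : realType) (n m : nat) (v : 'I_m -> 'I_n -> int) (lam : 'I_m -> R)
    (hP : toric_polytope v lam) (u : 'I_n -> R) (hu : inIntP v lam u) :
  [<-> strongly_bulk_balanced v lam u;
       forall mm : 'I_n -> int, in_trop v lam mm u;
       forall mm : 'I_n -> int, primitiveZ mm ->
         (exists J : pred 'I_m, \rank (spanR R v J) = n.-1 /\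
            forall j, J j -> dotZ mm (v j) = 0) ->
         in_trop v lam mm u].
Proof.
case: hP => _ _ bounded _; have full := rank_spanR_full bounded hu.
tfae.
- exact: bulk_balanced_in_trop.
- by move=> trop mm _ _; apply: trop.
- exact: trop_bulk_balanced.
Qed.
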